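(* Let $d$ be odd and let $\sigma_\triangle$ be a sign pattern of length $d+1$ with which the pair $(2,1)$ is compatible. For a polynomial realizing $(\sigma_\triangle,(2,1))$ denote its real roots by $-\beta<0<\alpha_1<\alpha_2$. (3) If all monomials of odd degree have positive sign in $\sigma_\triangle$, then there exist polynomials realizing $(\sigma_\triangle,(2,1))$, and every such polynomial satisfies $\beta<\alpha_1<\alpha_2$. (4) If all monomials of even degree have positive sign in $\sigma_\triangle$, then there exist polynomials realizing $(\sigma_\triangle,(2,1))$, and every such polynomial satisfies $\alpha_1<\alpha_2<\beta$.
   Context: A sign pattern of length $d+1$ is a sequence of $d+1$ symbols $+$/$-$ beginning with $+$; a monic polynomial $x^d+\sum_{j<d}a_jx^j$ with all $a_j\neq0$ defines the sign pattern $(+,\operatorname{sign}(a_{d-1}),\ldots,\operatorname{sign}(a_0))$, and the sign of the monomial $x^j$ in the pattern is the entry corresponding to $a_j$. For a sign pattern with $c$ sign changes and $p$ sign preservations ($c+p=d$), a pair $(pos,neg)$ is compatible with it if $pos\le c$, $c-pos$ even, $neg\le p$, $p-neg$ even. A monic polynomial realizes the couple $(\sigma,(pos,neg))$ if it has all coefficients non-zero, defines $\sigma$, has exactly $pos$ positive and $neg$ negative real roots, all simple, and no other real roots. *)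

From mathcomp Require Import all_boot all_order all_algebra.
From mathcomp Require Import reals.
Set Implicit Arguments. Unset Strict Implicit. Unset Printing Implicit Defensive.
Import Order.TTheory GRing.Theory Num.Theory.
Local Open Scope ring_scope.

(* A sign pattern is a seq bool (true = '+', false = '-'), listed as
   (sign of x^d, sign of a_{d-1}, ..., sign of a_0). *)
Definition sign_pattern (d : nat) (s : seq bool) : bool :=
  (size s == d.+1) && nth false s 0.

Definition sign_changes (s : seq bool) : nat :=
  (\sum_(i < (size s).-1) (nth false s i != nth false s i.+1))%N.

Definition sign_preservations (s : seq bool) : nat :=
  ((size s).-1 - sign_changes s)%N.

Definition compatible (s : seq bool) (pos neg : nat) : bool :=
  [&& (pos <= sign_changes s)%N, ~~ odd (sign_changes s - pos),
      (neg <= sign_preservations s)%N & ~~ odd (sign_preservations s - neg)].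

Definition monomial_sign (s : seq bool) (j : nat) : bool :=
  nth false s ((size s).-1 - j).

Definition defines_pattern (R : realType) (P : {poly R}) (s : seq bool) : Prop :=
  [/\ P \is monic, size P = size s,
      forall j, (j < size s)%N -> P`_j != 0
    & forall j, (j < size s)%N -> (0 < P`_j) = monomial_sign s j].

Definition realizes (R : realType) (P : {poly R}) (s : seq bool) (pos neg : nat) : Prop :=
  [/\ defines_pattern P s,
      exists rs : seq R, [/\ uniq rs, size rs = pos &
                           forall x, x \in rs <-> (0 < x /\ root P x)],
      exists rs : seq R, [/\ uniq rs, size rs = neg &
                           forall x, x \in rs <-> (x < 0 /\ root P x)]
    & forall x, root P x -> ~~ root P^`() x].

(* Let [k] be the largest degree with sign [-]; the monomials of
   the other ("majority") parity, the constant and the leading one are [+].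
   Give these coefficient 1, give [x^k] the coefficient [-(d+2)] and all other
   monomials a tiny coefficient [+-eps] of the prescribed sign.  Roots are
   counted with [E_m Q = x Q' - m Q]: since [(Q / x^m)' = E_m Q / x^(m+1)], by
   Rolle a root of [E_m Q] lies between two positive roots of [Q].  The
   coefficients of [E_(k+1) (E_k P)] carry nonnegative weights, so two dominant
   monomials keep it positive on [(0, +oo)]: [P] has at most two positive roots,
   all simple.  Similarly [E_m P (-y) < 0] for [y > 0] ([m = 0], resp. [m = d]),
   so [P] has at most one negative root, simple.  The signs of [P] at [-oo], [0],
   [1], [+oo] provide the roots.  If the odd monomials are [+], then [P(-a1) < P(a1) = 0 < P(0)], so
   the negative root lies in [(-a1, 0)]; if the even ones are [+], then
   [P(-a2) > -P(a2) = 0], so it lies below [-a2]. *)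

From mathcomp Require Import all_boot all_order all_algebra.
From mathcomp Require Import reals.
From mathcomp Require Import boolp classical_sets topology normedtype derive.
From mathcomp Require Import polyrcf.
From mathcomp Require Import ring lra zify.
Set Implicit Arguments.
Unset Strict Implicit.
Unset Printing Implicit Defensive.
Import Order.TTheory GRing.Theory Num.Theory.
Import numFieldNormedType.Exports.
Local Open Scope classical_set_scope.
Local Open Scope ring_scope.

Section EulerOperator.
Context {R : realType}.
Implicit Types (Q : {poly R}) (m : nat) (a b x y : R).

Definition eulerD m Q : {poly R} := 'X * Q^`() - m%:R *: Q.

Lemma horner_eulerD m Q x : (eulerD m Q).[x] = x * Q^`().[x] - m%:R * Q.[x].
Proof. by rewrite /eulerD !hornerE. Qed.

Lemma coef_eulerD m Q i : (eulerD m Q)`_i = (i%:R - m%:R) * Q`_i.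
Proof.
rewrite /eulerD coefB coefXM coefZ mulrBl; case: i => [|i] /=.
  by rewrite mul0r sub0r.
by rewrite coef_deriv; congr (_ - _); rewrite mulr_natl.
Qed.

Lemma size_eulerD m Q : (size (eulerD m Q) <= size Q)%N.
Proof.
by apply/leq_sizeP => j hj; rewrite coef_eulerD (leq_sizeP _ _ (leqnn _)) ?mulr0.
Qed.

Lemma eulerD_comp_opp m Q y : (eulerD m (Q \Po - 'X)).[y] = (eulerD m Q).[- y].
Proof.
rewrite !horner_eulerD deriv_comp derivN derivX hornerM !horner_comp !hornerN.
by rewrite hornerX hornerC; ring.
Qed.

Lemma root_eulerD_multiple m Q x : root Q x -> root Q^`() x -> root (eulerD m Q) x.
Proof. by move=> /eqP Qx /eqP Q'x; rewrite rootE horner_eulerD Qx Q'x !mulr0 subrr. Qed.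

Lemma is_derive_divXn m Q x : 0 < x ->
  is_derive x 1 (fun y => Q.[y] / y ^+ m) ((eulerD m Q).[x] / x ^+ m.+1).
Proof.
move=> x0; pose Xm : {poly R} := 'X^m.
have Xm0 : Xm.[x] != 0 by rewrite hornerXn expf_neq0 ?gt_eqF.
have dV : is_derive x 1 (fun y => Xm.[y]^-1) (- Xm.[x] ^- 2 *: Xm^`().[x]).
  apply: DeriveDef; first by apply: derivableV; [exact: Xm0|exact: derivable_horner].
  by rewrite deriveV ?derive_val //; exact: derivable_horner.
have -> : (fun y => Q.[y] / y ^+ m) = (fun y => Q.[y] * Xm.[y]^-1).
  by apply/funext => y; rewrite hornerXn.
apply: is_derive_eq (is_deriveM (is_derive_poly Q x) dV) _.
rewrite horner_eulerD /Xm derivXn hornerMn !hornerXn /GRing.scale /=.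
have xn0 : x != 0 by rewrite gt_eqF.
case: m {Xm Xm0 dV} => [|n] /=; first by rewrite !mulr0n mulr0 expr1 expr0 invr1; field.
by rewrite -mulr_natr !exprS; field; rewrite expf_neq0.
Qed.

Lemma eulerD_root_between m Q a b : 0 < a -> a < b -> root Q a -> root Q b ->
  exists2 c, a < c < b & root (eulerD m Q) c.
Proof.
move=> a0 ab /eqP Qa /eqP Qb.
have pos_ab x : x \in `[a, b] -> 0 < x.
  by rewrite in_itv /= => /andP[ax _]; exact: lt_le_trans ax.
have df x : x \in `[a, b] ->
    is_derive x 1 (fun y => Q.[y] / y ^+ m) ((eulerD m Q).[x] / x ^+ m.+1).
  by move/pos_ab; exact: is_derive_divXn.
have cont : {within `[a, b], continuous (fun y => Q.[y] / y ^+ m)}.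
  by apply: derivable_within_continuous => x /df [].
have [c cab] := MVT ab (fun x hx => df x (subset_itv_oo_cc hx)) cont.
have c0 : 0 < c by apply/pos_ab/subset_itv_oo_cc.
rewrite Qa Qb !mul0r subrr => /esym/eqP; rewrite mulf_eq0 subr_eq0 (gt_eqF ab) orbF.
rewrite mulf_eq0 invr_eq0 expf_eq0 (gt_eqF c0) andbF orbF => Ec.
by exists c; [move: cab; rewrite in_itv|].
Qed.
End EulerOperator.

Section RootCount.
Context {R : realType}.
Implicit Types (Q : {poly R}) (x y : R).

Lemma lead_coef_gt0_pos_value Q c : 0 < lead_coef Q -> exists2 x, c < x & 0 < Q.[x].
Proof.
move=> lc; have [n hn] := poly_pinfty_gt_lc lc.
exists (Num.max n (c + 1)); first by rewrite lt_max ltrDl ltr01 orbT.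
by apply: lt_le_trans lc _; apply: hn; rewrite le_max lexx.
Qed.

Lemma monic_odd_neg_value Q c : Q \is monic -> odd (size Q).-1 ->
  exists2 y, y < c & Q.[y] < 0.
Proof.
move=> /monicP lc od.
have lcN : 0 < lead_coef (- (Q \Po - 'X)).
  rewrite lead_coefN lead_coef_comp ?size_polyN ?size_polyX // lead_coefN.
  by rewrite lead_coefX lc mul1r -signr_odd od expr1 opprK ltr01.
have [x cx Qx] := lead_coef_gt0_pos_value (- c) lcN.
exists (- x); first by rewrite ltrNl.
by move: Qx; rewrite hornerN horner_comp hornerN hornerX oppr_gt0.
Qed.

Section PositiveRoots.
Variables (Q : {poly R}) (k : nat).
Hypothesis eulerD2_gt0 : forall x, 0 < x -> 0 < (eulerD k.+1 (eulerD k Q)).[x].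

Lemma eulerD_pos_root_unique u v : 0 < u -> u < v ->
  root (eulerD k Q) u -> root (eulerD k Q) v -> False.
Proof.
move=> u0 uv Gu Gv; have [c /andP[uc _] /eqP Gc] := eulerD_root_between k.+1 u0 uv Gu Gv.
by have := eulerD2_gt0 (lt_trans u0 uc); rewrite Gc ltxx.
Qed.

Lemma pos_roots_le2 x y z : 0 < x -> x < y -> y < z ->
  root Q x -> root Q y -> root Q z -> False.
Proof.
move=> x0 xy yz Qx Qy Qz.
have [c1 /andP[xc1 c1y] Gc1] := eulerD_root_between k x0 xy Qx Qy.
have [c2 /andP[yc2 _] Gc2] := eulerD_root_between k (lt_trans x0 xy) yz Qy Qz.
exact: eulerD_pos_root_unique (lt_trans x0 xc1) (lt_trans c1y yc2) Gc1 Gc2.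
Qed.

Lemma pos_root_simple x r : 0 < x -> 0 < r -> r != x -> root Q x -> root Q r ->
  ~~ root Q^`() x.
Proof.
move=> x0 r0 rx Qx Qr; apply/negP => Q'x.
have Gx := root_eulerD_multiple k Qx Q'x.
case: (ltgtP r x) rx => // [rlx|xlr] _.
  have [c /andP[rc cx] Gc] := eulerD_root_between k r0 rlx Qr Qx.
  exact: eulerD_pos_root_unique (lt_trans r0 rc) cx Gc Gx.
have [c /andP[xc _] Gc] := eulerD_root_between k x0 xlr Qx Qr.
exact: eulerD_pos_root_unique x0 xc Gx Gc.
Qed.

Lemma pos_root_cases r1 r2 x : 0 < r1 -> r1 < r2 -> root Q r1 -> root Q r2 ->
  0 < x -> root Q x -> x = r1 \/ x = r2.
Proof.
move=> r1_gt0 r12 Qr1 Qr2 x0 Qx.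
case: (ltgtP x r1) => [xr1|r1x|]; last by left.
  by case: (pos_roots_le2 x0 xr1 r12 Qx Qr1 Qr2).
case: (ltgtP x r2) => [xr2|r2x|]; last by right.
  by case: (pos_roots_le2 r1_gt0 r1x xr2 Qr1 Qx Qr2).
by case: (pos_roots_le2 r1_gt0 r12 r2x Qr1 Qr2 Qx).
Qed.

End PositiveRoots.

Section NegativeRoots.
Variables (Q : {poly R}) (m : nat).
Hypothesis eulerD_neg : forall y, 0 < y -> (eulerD m Q).[- y] < 0.

Lemma neg_root_unique x y : x < 0 -> y < 0 -> root Q x -> root Q y -> x = y.
Proof.
have Qopp z : root (Q \Po - 'X) z = root Q (- z).
  by rewrite !rootE horner_comp hornerN hornerX.
wlog xy : x y / x < y => [hwlog x0 y0 Qx Qy|x0 y0 Qx Qy].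
  by case: (ltgtP x y) => // [lxy|lyx]; [exact: hwlog|exact/esym/hwlog].
rewrite -[x]opprK -Qopp in Qx; rewrite -[y]opprK -Qopp in Qy.
have Ny0 : 0 < - y by rewrite oppr_gt0.
have Nyx : - y < - x by rewrite ltrN2.
have [c /andP[yc _] /eqP Uc] := eulerD_root_between m Ny0 Nyx Qy Qx.
have := eulerD_neg (lt_trans Ny0 yc).
by rewrite -eulerD_comp_opp Uc ltxx.
Qed.

Lemma neg_root_simple x : x < 0 -> root Q x -> ~~ root Q^`() x.
Proof.
move=> x0 Qx; apply/negP => /(root_eulerD_multiple m Qx) /eqP Gx.
have Nx0 : 0 < - x by rewrite oppr_gt0.
by have := eulerD_neg Nx0; rewrite opprK Gx ltxx.
Qed.

End NegativeRoots.

Lemma realizes_2_1 (P : {poly R}) (s : seq bool) k m :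
  defines_pattern P s -> odd (size P).-1 -> 0 < P.[0] -> P.[1] < 0 ->
  (forall x, 0 < x -> 0 < (eulerD k.+1 (eulerD k P)).[x]) ->
  (forall y, 0 < y -> (eulerD m P).[- y] < 0) ->
  realizes P s 2 1.
Proof.
move=> patP od P0 P1 euler2_gt0 eulerN_lt0; have [monP _ _ _] := patP.
have P01 : P.[0] * P.[1] < 0 by rewrite pmulr_rlt0.
have [r1 /[!in_itv]/= /andP[r1_gt0 r1_lt1] Pr1] := poly_ivtoo ler01 P01.
have lcP : 0 < lead_coef P by rewrite (monicP monP) ltr01.
have [x2 x2_gt1 Px2] := lead_coef_gt0_pos_value 1 lcP.
have P12 : P.[1] * P.[x2] < 0 by rewrite nmulr_rlt0.
have [r2 /[!in_itv]/= /andP[r2_gt1 _] Pr2] := poly_ivtoo (ltW x2_gt1) P12.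
have [y3 y3_lt0 Py3] := monic_odd_neg_value 0 monP od.
have P30 : P.[y3] * P.[0] < 0 by rewrite nmulr_rlt0.
have [z /[!in_itv]/= /andP[_ z_lt0] Pz] := poly_ivtoo (ltW y3_lt0) P30.
have r12 : r1 < r2 by apply: lt_trans r2_gt1.
have r2_gt0 : 0 < r2 by apply: lt_trans r12.
have pos_root := pos_root_cases euler2_gt0 r1_gt0 r12 Pr1 Pr2.
split => //.
- exists [:: r1; r2]; split=> [|//|x]; first by rewrite /= inE (lt_eqF r12).
  rewrite !inE; split; first by case/orP => /eqP ->.
  by case=> x0 /(pos_root x x0) [|] ->; rewrite eqxx ?orbT.
- exists [:: z]; split => // x; rewrite inE; split; first by move/eqP ->.
  by case=> x0 Px; rewrite (neg_root_unique eulerN_lt0 x0 z_lt0 Px Pz).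
move=> x Px; case: (ltgtP x 0) => [x0|x0|x0]; last by move: Px; rewrite x0 rootE gt_eqF.
  exact: (neg_root_simple eulerN_lt0 x0 Px).
case: (pos_root x x0 Px) => ->.
  exact: (pos_root_simple euler2_gt0 r1_gt0 r2_gt0 (negbT (gt_eqF r12)) Pr1 Pr2).
exact: (pos_root_simple euler2_gt0 r2_gt0 r1_gt0 (negbT (lt_eqF r12)) Pr2 Pr1).
Qed.

End RootCount.

Section DominantTerms.
Context {R : realFieldType}.

Lemma exprn_le_add_ends (x : R) a j b : 0 < x -> (a <= j <= b)%N ->
  x ^+ j <= x ^+ a + x ^+ b.
Proof.
move=> x0 /andP[aj jb]; case: (lerP x 1) => x1.
  by apply: le_trans (ler_wiXn2l (ltW x0) x1 aj) _; rewrite lerDl exprn_ge0 ?ltW.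
by apply: le_trans (ler_weXn2l (ltW x1) jb) _; rewrite lerDr exprn_ge0 ?ltW.
Qed.

Lemma sum_two_dominant_gt0 n a b (t : nat -> R) (e x : R) :
  (a < b < n)%N -> 0 < x -> 0 <= e -> n%:R * e <= 1 / 2 ->
  1 <= t a -> 1 <= t b ->
  (forall j, (j < n)%N -> j != a -> j != b ->
     0 <= t j \/ (a < j < b)%N /\ - e <= t j) ->
  0 < \sum_(j < n) t j * x ^+ j.
Proof.
move=> /andP[ab bn] x0 e0 ne ta tb tj.
have an : (a < n)%N by apply: ltn_trans bn.
have A0 : 0 < x ^+ a by rewrite exprn_gt0.
have B0 : 0 < x ^+ b by rewrite exprn_gt0.
rewrite (bigD1 (Ordinal an)) //= (bigD1 (Ordinal bn)) /=; last first.
  by rewrite -val_eqE /= gtn_eqF.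
set S := \sum_(_ < n | _) _.
have lbS : - (n%:R * e * (x ^+ a + x ^+ b)) <= S.
  have -> : - (n%:R * e * (x ^+ a + x ^+ b)) = \sum_(j < n) - e * (x ^+ a + x ^+ b).
    by rewrite sumr_const card_ord -mulr_natl; ring.
  rewrite /S [X in _ <= X]big_mkcond /=; apply: ler_sum => j _.
  have abj0 : - e * (x ^+ a + x ^+ b) <= 0.
    by rewrite mulNr oppr_le0 mulr_ge0 // addr_ge0 // ltW.
  case: ifP => // /andP[]; rewrite -!val_eqE /= => ja jb.
  have [tj0|[/andP[aj jb'] tje]] := tj j (ltn_ord j) ja jb.
    by apply: le_trans abj0 _; rewrite mulr_ge0 // exprn_ge0 // ltW.
  have xj : x ^+ j <= x ^+ a + x ^+ b.
    by apply: exprn_le_add_ends => //; rewrite (ltnW aj) (ltnW jb').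
  apply: le_trans (_ : - e * x ^+ j <= _).
    by apply: ler_wnM2l => //; rewrite oppr_le0.
  by apply: ler_wpM2r => //; rewrite exprn_ge0 // ltW.
have taA : x ^+ a <= t a * x ^+ a by rewrite ler_pMl.
have tbB : x ^+ b <= t b * x ^+ b by rewrite ler_pMl.
have neAB : n%:R * e * (x ^+ a + x ^+ b) <= 1 / 2 * (x ^+ a + x ^+ b).
  by apply: ler_wpM2r => //; rewrite addr_ge0 ?ltW.
lra.
Qed.

End DominantTerms.

Section Weights.
Context {R : realDomainType}.

Lemma signr_ifodd j : (-1) ^+ j = (if odd j then -1 else 1) :> R.
Proof. by rewrite -signr_odd; case: (odd j). Qed.

Lemma consecutive_weight_ge0 (i k : nat) : 0 <= (i%:R - k.+1%:R) * (i%:R - k%:R) :> R.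
Proof.
case: (leqP i k) => h.
  by apply: mulr_le0; rewrite subr_le0 ler_nat // leqW.
by apply: mulr_ge0; rewrite subr_ge0 ler_nat // ltnW.
Qed.

Lemma consecutive_weight_le (i k d : nat) : (i <= d)%N -> (k <= d)%N ->
  (i%:R - k.+1%:R) * (i%:R - k%:R) <= (d.+1 ^ 2)%N%:R :> R.
Proof.
rewrite -(ler_nat R) -[(k <= d)%N](ler_nat R) natrX -!natr1 => id kd.
have i0 : (0 : R) <= i%:R by [].
have k0 : (0 : R) <= k%:R by [].
nra.
Qed.

Lemma signed_weight_ge (j m d : nat) : (j <= d)%N -> (m <= d)%N ->
  - (d.+1 ^ 2)%N%:R <= (m%:R - j%:R) * (-1) ^+ j :> R.
Proof.
rewrite -(ler_nat R) -[(m <= d)%N](ler_nat R) natrX -natr1 => jd md.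
have j0 : (0 : R) <= j%:R by [].
have m0 : (0 : R) <= m%:R by [].
rewrite signr_ifodd; case: (odd j); nra.
Qed.

End Weights.

Section Construction.
Context {R : realType}.
Variables (d k : nat) (s : seq bool) (q : bool).

Definition major j := (odd j == q) || (j == 0)%N || (j == d).

Hypothesis size_s : size s = d.+1.
Hypothesis major_sign : forall j, (j <= d)%N -> major j -> monomial_sign s j.
Hypothesis k_le_d : (k <= d)%N.
Hypothesis sign_k : ~~ monomial_sign s k.
Hypothesis sign_gt_k : forall j, (j <= d)%N -> (k < j)%N -> monomial_sign s j.

(* All weights are at most [(d+1)^2], so the [d+1] tiny terms together cost at
   most [1/2] of the dominant ones. *)
Definition realizer_eps : R := ((2 * d.+1 ^ 3)%N%:R)^-1.

(* The coefficient at [k] outweighs all the others together: [P.[1] < 0]. *)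
Definition realizer_coef j : R :=
  if major j then 1 else if j == k then - d.+2%:R
  else if monomial_sign s j then realizer_eps else - realizer_eps.

Definition realizer : {poly R} := \poly_(j < d.+1) realizer_coef j.

Lemma realizer_eps_gt0 : 0 < realizer_eps.
Proof. by rewrite invr_gt0 ltr0n muln_gt0 expn_gt0. Qed.

Lemma realizer_eps_le1 : realizer_eps <= 1.
Proof. by rewrite invf_le1 ?ltr0n ?ler1n muln_gt0 expn_gt0. Qed.

Lemma realizer_eps_small : d.+1%:R * ((d.+1 ^ 2)%N%:R * realizer_eps) <= 1 / 2.
Proof.
rewrite /realizer_eps natrM !natrX le_eqVlt; apply/orP; left; apply/eqP.
by field; rewrite addrC natr1 pnatr_eq0.
Qed.

Lemma major_k : major k = false.
Proof. by apply/negbTE; apply: contra sign_k; exact: major_sign. Qed.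

Lemma realizer_coef_cases j : (j <= d)%N ->
  [\/ major j /\ realizer_coef j = 1, j = k /\ realizer_coef j = - d.+2%:R,
      ~~ major j /\ realizer_coef j = realizer_eps |
      [/\ ~~ major j, (j < k)%N & realizer_coef j = - realizer_eps]].
Proof.
rewrite /realizer_coef => jd; case: ifP => [|/negbT] Mj; first by apply: Or41.
case: eqP => [->|/eqP jk]; first by apply: Or42.
case: ifP => sj; first by apply: Or43.
apply: Or44; split => //; rewrite ltnNge; apply: contraFN sj => kj.
by apply: sign_gt_k; rewrite // ltn_neqAle eq_sym jk.
Qed.

Lemma realizer_coef_le1 j : (j <= d)%N -> realizer_coef j <= 1.
Proof.
move=> jd; have e0 := realizer_eps_gt0; have e1 := realizer_eps_le1.
have M0 : (0 : R) <= d.+2%:R by [].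
by case: (realizer_coef_cases jd) => [[_ ->]|[_ ->]|[_ ->]|[_ _ ->]] //; lra.
Qed.

Lemma coef_realizer j : (j < d.+1)%N -> realizer`_j = realizer_coef j.
Proof. by move=> jd; rewrite coef_poly jd. Qed.

Lemma size_realizer : size realizer = d.+1.
Proof. by apply: size_poly_eq; rewrite /realizer_coef /major eqxx !orbT oner_neq0. Qed.

Lemma realizer_pattern : defines_pattern realizer s.
Proof.
have e0 := realizer_eps_gt0; split; rewrite ?size_s.
- rewrite monicE /lead_coef size_realizer coef_realizer //.
  by rewrite /realizer_coef /major eqxx !orbT.
- exact: size_realizer.
- move=> j jd; rewrite coef_realizer //.
  by case: (realizer_coef_cases jd) => [[_ ->]|[_ ->]|[_ ->]|[_ _ ->]];
    rewrite ?oppr_eq0 ?oner_neq0 ?pnatr_eq0 ?gt_eqF.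
- move=> j jd; rewrite coef_realizer // /realizer_coef.
  case: ifP => Mj; first by rewrite ltr01 major_sign.
  case: eqP => [->|_]; first by rewrite oppr_gt0 ltrn0 (negbTE sign_k).
  by case: ifP => sj; rewrite ?e0 // oppr_gt0 ltNge ltW.
Qed.

Lemma realizer0_gt0 : 0 < realizer.[0].
Proof.
by rewrite horner_coef0 coef_realizer // /realizer_coef /major eqxx orbT ltr01.
Qed.

Lemma realizer1_lt0 : realizer.[1] < 0.
Proof.
have kd : (k < d.+1)%N by [].
rewrite horner_poly (bigD1 (Ordinal kd)) //= /realizer_coef major_k eqxx.
have rest : \sum_(i < d.+1 | i != Ordinal kd) realizer_coef i * 1 ^+ i <= d.+1%:R.
  rewrite -[d.+1 in X in _ <= X]card_ord -sumr_const big_mkcond /=.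
  apply: ler_sum => i _; rewrite expr1n mulr1.
  by case: ifP => _; [exact: (realizer_coef_le1 (ltn_ord i))|exact: ler01].
by rewrite expr1n mulr1 addrC subr_lt0 (le_lt_trans rest) ?ltr_nat.
Qed.

Lemma realizer_eulerD2_gt0 b : (0 < k)%N -> (0 < b <= d)%N -> major b ->
  1 <= (b%:R - k.+1%:R) * (b%:R - k%:R) :> R ->
  (forall j, (j < k)%N -> ~~ major j -> (j < b)%N) ->
  forall x, 0 < x -> 0 < (eulerD k.+1 (eulerD k realizer)).[x].
Proof.
move=> k0 /andP[b0 bd] Mb wb minor_lt_b x x0.
have e0 := realizer_eps_gt0.
rewrite (@horner_coef_wide _ d.+1); last first.
  by rewrite -size_realizer !(leq_trans (size_eulerD _ _)).
under eq_bigr => i _ do rewrite !coef_eulerD coef_realizer // mulrA.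
apply: (@sum_two_dominant_gt0 _ _ 0 b
  (fun j => (j%:R - k.+1%:R) * (j%:R - k%:R) * realizer_coef j)
  ((d.+1 ^ 2)%N%:R * realizer_eps)) => //.
- by rewrite b0 ltnS.
- by rewrite mulr_ge0 // ltW.
- exact: realizer_eps_small.
- rewrite /realizer_coef /major eqxx orbT mulr1 !sub0r mulrNN.
  by rewrite -natrM ler1n muln_gt0 k0.
- by rewrite /realizer_coef Mb mulr1.
move=> j jd j0 jb; have w0 := @consecutive_weight_ge0 R j k.
case: (realizer_coef_cases jd) => [[_ ->]|[-> ->]|[_ ->]|[mj jk ->]].
- by left; rewrite mulr1.
- by left; rewrite subrr mulr0 mul0r.
- by left; rewrite mulr_ge0 // ltW.
right; split; first by rewrite lt0n j0 minor_lt_b.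
rewrite mulrN lerN2 ler_wpM2r ?(ltW e0) //.
exact: consecutive_weight_le.
Qed.

Lemma realizer_eulerD_opp_lt0 m a b : (m <= d)%N -> (a < b <= d)%N ->
  major a -> major b ->
  1 <= (m%:R - a%:R) * (-1) ^+ a :> R -> 1 <= (m%:R - b%:R) * (-1) ^+ b :> R ->
  (forall j, (j <= d)%N -> major j -> 0 <= (m%:R - j%:R) * (-1) ^+ j :> R) ->
  (forall j, (j <= d)%N -> ~~ major j ->
     (m%:R - j%:R) * (-1) ^+ j <= 0 :> R /\ (a < j < b)%N) ->
  forall y, 0 < y -> (eulerD m realizer).[- y] < 0.
Proof.
move=> md /andP[ab bd] Ma Mb wa wb major_w minor_w y y0.
have e0 := realizer_eps_gt0.
rewrite (@horner_coef_wide _ d.+1); last first.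
  by rewrite -size_realizer (leq_trans (size_eulerD _ _)).
have -> : \sum_(i < d.+1) (eulerD m realizer)`_i * (- y) ^+ i =
    - \sum_(i < d.+1) ((m%:R - i%:R) * (-1) ^+ i * realizer_coef i) * y ^+ i.
  rewrite -sumrN; apply: eq_bigr => i _.
  by rewrite coef_eulerD coef_realizer // [(- y) ^+ _]exprNn; ring.
rewrite oppr_lt0; apply: (@sum_two_dominant_gt0 _ _ a b
  (fun j => (m%:R - j%:R) * (-1) ^+ j * realizer_coef j)
  ((d.+1 ^ 2)%N%:R * realizer_eps)) => //.
- by rewrite ab ltnS.
- by rewrite mulr_ge0 // ltW.
- exact: realizer_eps_small.
- by rewrite /realizer_coef Ma mulr1.
- by rewrite /realizer_coef Mb mulr1.
move=> j jd ja jb.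
case: (realizer_coef_cases jd) => [[mj ->]|[-> ->]|[mj ->]|[mj _ ->]].
- by left; rewrite mulr1 major_w.
- have [wk0 _] := minor_w _ k_le_d (negbT major_k).
  by left; rewrite mulrN -mulNr mulr_ge0 // oppr_ge0.
- have [wj0 ajb] := minor_w _ jd mj; right; split => //.
  rewrite -mulNr ler_wpM2r ?(ltW e0) //.
  exact: signed_weight_ge.
have [wj0 _] := minor_w _ jd mj.
by left; rewrite mulrN -mulNr mulr_ge0 ?oppr_ge0 // ltW.
Qed.

Lemma realizer_realizes_odd_major : odd d -> q -> realizes realizer s 2 1.
Proof.
move=> d_odd q_odd; have := major_k.
rewrite /major q_odd eqb_id => /norP[/norP[k_even /eqP k_neq0] /eqP k_neq_d].
have k_gt0 : (0 < k)%N by lia.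
have k1_odd : odd k.-1 by move: k_even; rewrite -{1}(prednK k_gt0) /= negbK.
have k2 : (2 <= k)%N by move: k1_odd; case: (k) k_gt0 => [|[]].
have kd : (k < d)%N by lia.
apply: (@realizes_2_1 _ _ _ k 0).
- exact: realizer_pattern.
- by rewrite size_realizer.
- exact: realizer0_gt0.
- exact: realizer1_lt0.
- apply: (@realizer_eulerD2_gt0 k.-1) => //; first by lia.
  + by rewrite /major q_odd k1_odd.
  + by rewrite -(prednK k_gt0) /= -!natr1; lra.
  + move=> j jk mj; have : j != k.-1.
      by apply: contraNneq mj => ->; rewrite /major k1_odd q_odd.
    by lia.
apply: (@realizer_eulerD_opp_lt0 _ 1 d) => //.
- by lia.
- by rewrite /major q_odd.
- by rewrite /major eqxx !orbT.
- by rewrite sub0r expr1 mulrNN mulr1.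
- by rewrite sub0r signr_ifodd d_odd mulrNN mulr1 ler1n; lia.
- move=> j jd; rewrite /major q_odd eqb_id sub0r signr_ifodd.
  case: ifP => [_ _|j_even /= /orP[/eqP->|/eqP jd_eq]]; first by rewrite mulrNN mulr1.
    by rewrite mulr1 oppr0.
  by move: d_odd; rewrite -jd_eq j_even.
move=> j jd; rewrite /major q_odd eqb_id => /norP[/norP[j_even /eqP j0] /eqP j_neq_d].
rewrite sub0r signr_ifodd (negbTE j_even) mulr1 oppr_le0; split => //.
have : j != 1%N by apply: contraNneq j_even => ->.
by lia.
Qed.

Lemma realizer_realizes_even_major : odd d -> ~~ q -> realizes realizer s 2 1.
Proof.
move=> d_odd /negbTE q_even; have := major_k.
rewrite /major q_even eqbF_neg => /norP[/norP[/negPn k_odd /eqP k_neq0] /eqP k_neq_d].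
have k2d : (k.+2 <= d)%N.
  have : (k.+1 != d)%N by apply: contraTneq d_odd => <-; rewrite /= k_odd.
  by lia.
have d_gt0 : (0 < d)%N by lia.
have d1_even : ~~ odd d.-1 by move: d_odd; rewrite -{1}(prednK d_gt0).
apply: (@realizes_2_1 _ _ _ k d).
- exact: realizer_pattern.
- by rewrite size_realizer.
- exact: realizer0_gt0.
- exact: realizer1_lt0.
- apply: (@realizer_eulerD2_gt0 d); [lia|lia| | |].
  + by rewrite /major eqxx !orbT.
  + have : (k.+2%:R : R) <= d%:R by rewrite ler_nat.
    by rewrite -!natr1 => ?; nra.
  + by move=> j jk _; lia.
apply: (@realizer_eulerD_opp_lt0 _ 0 d.-1) => //.
- by lia.
- by rewrite /major eqxx orbT.
- by rewrite /major q_even (negbTE d1_even).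
- by rewrite subr0 expr0 mulr1 ler1n.
- rewrite signr_ifodd (negbTE d1_even) mulr1 -{1}(prednK d_gt0) -natr1.
  by rewrite addrAC subrr add0r.
- move=> j jd; rewrite /major q_even eqbF_neg signr_ifodd.
  case: ifP => [j_odd|_ _]; last by rewrite mulr1 subr_ge0 ler_nat.
  by move=> /= /orP[/eqP j0|/eqP ->]; [rewrite j0 in j_odd|rewrite subrr mul0r].
move=> j jd; rewrite /major q_even eqbF_neg.
move=> /norP[/norP[/negPn j_odd /eqP j0] /eqP j_neq_d].
rewrite signr_ifodd j_odd mulrN1 oppr_le0 subr_ge0 ler_nat; split => //.
have : j != d.-1 by apply: contraTneq j_odd => ->.
by lia.
Qed.

End Construction.

Lemma odd_sign_changes (f : nat -> bool) n :
  odd (\sum_(i < n) (f i != f i.+1)) = (f 0%N != f n).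
Proof.
elim: n => [|n IH]; first by rewrite big_ord0 /=; case: (f 0%N).
by rewrite big_ord_recr /= oddD IH oddb; case: (f 0%N); case: (f n); case: (f n.+1).
Qed.

Lemma pattern_coef_gt0 {R : realType} (P : {poly R}) s i :
  defines_pattern P s -> (i < size P)%N -> monomial_sign s i -> 0 < P`_i.
Proof. by case=> _ size_P _ sign_P iP; rewrite sign_P -?size_P. Qed.

Section Compatibility.
Variables (d : nat) (s : seq bool).
Hypotheses (pat_s : sign_pattern d s) (compat_s : compatible s 2 1).

Lemma size_pattern : size s = d.+1.
Proof. by case/andP: pat_s => /eqP. Qed.

Lemma monomial_sign_lead : monomial_sign s d.
Proof. by rewrite /monomial_sign size_pattern subnn; case/andP: pat_s. Qed.

(* An even number of sign changes means equal first and last signs. *)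
Lemma monomial_sign_const : monomial_sign s 0.
Proof.
have [_ codd _ _] := and4P compat_s.
move: codd; rewrite oddB; last by case/and4P: compat_s.
rewrite /sign_changes size_pattern odd_sign_changes /monomial_sign size_pattern subn0 /=.
by case/andP: pat_s => _ ->; case: nth.
Qed.

Lemma last_negative_monomial : exists k, [/\ (k <= d)%N, ~~ monomial_sign s k &
  forall j, (j <= d)%N -> (k < j)%N -> monomial_sign s j].
Proof.
have neg_exists : exists i, (i <= d)%N && ~~ monomial_sign s i.
  case: (pickP (fun i : 'I_d.+1 => ~~ monomial_sign s i)) => [i neg_i|all_pos].
    by exists i; rewrite neg_i andbT -ltnS.
  have pos i : (i <= d)%N -> nth false s i.
    move=> id; have dil : (d - i < d.+1)%N by rewrite ltnS leq_subr.
    move: (all_pos (Ordinal dil)).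
    by rewrite /monomial_sign size_pattern /= subKn // => /negbFE.
  have [c2 _ _ _] := and4P compat_s.
  move: c2; rewrite /sign_changes size_pattern big1 // => i _.
  by rewrite (pos i (ltnW (ltn_ord i))) (pos i.+1 (ltn_ord i)).
have bounded i : (i <= d)%N && ~~ monomial_sign s i -> (i <= d)%N by case/andP.
have [k /andP[kd neg_k] k_max] := ex_maxnP neg_exists bounded.
exists k; split => // j jd kj; apply: contraTT kj => neg_j.
by rewrite -leqNgt k_max // jd.
Qed.

Lemma realizes_size {R : realType} (P : {poly R}) pos neg :
  realizes P s pos neg -> size P = d.+1.
Proof. by case=> -[_ -> _ _] _ _ _; exact: size_pattern. Qed.

Lemma exists_realizes_2_1 {R : realType} (q : bool) : odd d ->
  (forall j, (j <= d)%N -> odd j = q -> monomial_sign s j) ->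
  exists P : {poly R}, realizes P s 2 1.
Proof.
move=> d_odd parity_sign; have [k [kd neg_k k_max]] := last_negative_monomial.
have major_sign j : (j <= d)%N -> major d q j -> monomial_sign s j.
  move=> jd /orP[/orP[/eqP/(parity_sign _ jd)//|/eqP->]|/eqP->].
    exact: monomial_sign_const.
  exact: monomial_sign_lead.
exists (realizer d k s q); case: q major_sign {parity_sign} => major_sign.
  exact: realizer_realizes_odd_major size_pattern major_sign kd neg_k k_max d_odd _.
exact: realizer_realizes_even_major size_pattern major_sign kd neg_k k_max d_odd _.
Qed.

End Compatibility.

Section RootOrder.
Context {R : realType}.
Implicit Types (P : {poly R}) (x : R).

Lemma hornerN_lt_odd_coef_gt0 P x :
  (forall i, (i < size P)%N -> odd i -> 0 < P`_i) -> (1 < size P)%N -> 0 < x ->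
  P.[- x] < P.[x].
Proof.
move=> odd_gt0 sP x0; rewrite -subr_gt0 !horner_coef -sumrB (bigD1 (Ordinal sP)) //=.
rewrite !expr1 mulrN opprK -mulr2n; apply: ltr_wpDr; last first.
  by rewrite mulrn_wgt0 // mulr_gt0 // odd_gt0.
apply: sumr_ge0 => i _; rewrite exprNn signr_ifodd.
case: ifP => [oi|_]; last by rewrite mul1r subrr.
rewrite mulN1r mulrN opprK -mulr2n mulrn_wge0 // mulr_ge0 ?exprn_ge0 ?ltW //.
exact: odd_gt0.
Qed.

Lemma hornerDN_gt0_even_coef_gt0 P x :
  (forall i, (i < size P)%N -> ~~ odd i -> 0 < P`_i) -> (0 < size P)%N ->
  0 < P.[x] + P.[- x].
Proof.
move=> even_gt0 sP; rewrite !horner_coef -big_split (bigD1 (Ordinal sP)) //=.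
rewrite !expr0 !mulr1; apply: ltr_wpDr; last by rewrite addr_gt0 // even_gt0.
apply: sumr_ge0 => i _; rewrite exprNn signr_ifodd.
case: ifP => [_|/negbT oi]; first by rewrite mulN1r mulrN subrr.
rewrite mul1r -mulr2n mulrn_wge0 // mulr_ge0 ?exprn_even_ge0 //.
exact/ltW/even_gt0.
Qed.

Section UniqueNegativeRoot.
Variables (P : {poly R}) (beta : R).
Hypothesis neg_root_unique : forall x, x < 0 -> root P x -> x = - beta.

Lemma opp_neg_root_lt a : 0 < a -> 0 < P.[0] -> P.[- a] < 0 -> beta < a.
Proof.
move=> a0 P0 Pa; have Pa0 : P.[- a] * P.[0] < 0 by rewrite nmulr_rlt0.
have Na : - a <= 0 by rewrite oppr_le0 ltW.
have [z /[!in_itv]/= /andP[az z0] Pz] := poly_ivtoo Na Pa0.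
by rewrite -ltrN2 -(neg_root_unique z0 Pz).
Qed.

Lemma lt_opp_neg_root a : P \is monic -> odd (size P).-1 ->
  0 < a -> 0 < P.[- a] -> a < beta.
Proof.
move=> monP odd_deg a0 Pa; have [y ya Py] := monic_odd_neg_value (- a) monP odd_deg.
have Pya : P.[y] * P.[- a] < 0 by rewrite nmulr_rlt0.
have [z /[!in_itv]/= /andP[_ za] Pz] := poly_ivtoo (ltW ya) Pya.
have z0 : z < 0 by rewrite (lt_trans za) // oppr_lt0.
by rewrite -ltrN2 -(neg_root_unique z0 Pz).
Qed.

End UniqueNegativeRoot.

Lemma realizes_neg_root_unique P s pos beta : realizes P s pos 1 ->
  0 < beta -> root P (- beta) -> forall x, x < 0 -> root P x -> x = - beta.
Proof.
case=> _ _ [[|r [|? ?]] [_ //= _ neg_rs]] _ beta0 Pb x x0 Px.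
have /neg_rs : - beta < 0 /\ root P (- beta) by rewrite oppr_lt0.
by move/neg_rs: (conj x0 Px); rewrite !inE => /eqP -> /eqP ->.
Qed.
End RootOrder.

Theorem theorem4 (R : realType) (d : nat) (s : seq bool) :
  odd d -> sign_pattern d s -> compatible s 2 1 ->
  ((forall j, (j <= d)%N -> odd j -> monomial_sign s j) ->
     (exists P : {poly R}, realizes P s 2 1) /\
     (forall (P : {poly R}) (beta a1 a2 : R), realizes P s 2 1 ->
        0 < beta -> root P (- beta) -> 0 < a1 -> a1 < a2 ->
        root P a1 -> root P a2 -> beta < a1 /\ a1 < a2)) /\
  ((forall j, (j <= d)%N -> ~~ odd j -> monomial_sign s j) ->
     (exists P : {poly R}, realizes P s 2 1) /\
     (forall (P : {poly R}) (beta a1 a2 : R), realizes P s 2 1 ->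
        0 < beta -> root P (- beta) -> 0 < a1 -> a1 < a2 ->
        root P a1 -> root P a2 -> a1 < a2 /\ a2 < beta)).
Proof.
move=> d_odd pat_s compat_s.
split=> [odd_pos|even_pos]; split.
- by apply: (exists_realizes_2_1 pat_s compat_s (q := true)) => // j; exact: odd_pos.
- move=> P beta a1 a2 realP beta0 Pb a1_gt0 a12 Pa1 _; split => //.
  have [pat_P _ _ _] := realP.
  apply: (opp_neg_root_lt (realizes_neg_root_unique realP beta0 Pb) a1_gt0).
    rewrite horner_coef0 (pattern_coef_gt0 pat_P) //.
      by rewrite (realizes_size pat_s realP).
    exact: monomial_sign_const pat_s compat_s.
  rewrite -(eqP Pa1) hornerN_lt_odd_coef_gt0 // => [i isz oi|].
    by rewrite (pattern_coef_gt0 pat_P) // odd_pos // -ltnS -(realizes_size pat_s realP).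
  by rewrite (realizes_size pat_s realP) ltnS lt0n; case: (d) d_odd.
- apply: (exists_realizes_2_1 pat_s compat_s (q := false)) => // j jd /negbT.
  exact: even_pos.
move=> P beta a1 a2 realP beta0 Pb a1_gt0 a12 _ Pa2; split => //.
have [pat_P _ _ _] := realP; have [mon_P _ _ _] := pat_P.
apply: (lt_opp_neg_root (realizes_neg_root_unique realP beta0 Pb) mon_P).
- by rewrite (realizes_size pat_s realP).
- exact: lt_trans a12.
rewrite -[P.[- a2]]add0r -[X in X + _](eqP Pa2) hornerDN_gt0_even_coef_gt0 //.
  move=> i isz ei; rewrite (pattern_coef_gt0 pat_P) // even_pos //.
  by rewrite -ltnS -(realizes_size pat_s realP).
by rewrite (realizes_size pat_s realP).
Qed.
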